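(* Let $T:\mathbb{Z}\to\mathbb{Z}$ be defined by $T(n)=n/2$ if $n$ is even and $T(n)=(3n+1)/2$ if $n$ is odd. Let $[2]_3$ denote the set of integers congruent to $2 \pmod 3$, and define $F:[2]_3\to[2]_3$ by $F(n)=T(n)$ if $n\equiv 5\pmod 6$ and $F(n)=T(T(n))$ if $n\equiv 2\pmod 6$. Then the $3x+1$ conjecture holds if and only if for every positive integer $n\in[2]_3$ the $F$-trajectory of $n$ eventually reaches $2$ (i.e., $F^k(n)=2$ for some $k\ge 0$).
   Context: The $3x+1$ conjecture is the statement: for every positive integer $n$, the $T$-trajectory $(T^k(n))_{k\ge0}$ eventually reaches the cycle $(2,1)$, i.e., $T^k(n)=1$ for some $k\ge 0$. Iterates are defined by $f^0(n)=n$, $f^{k+1}(n)=f(f^k(n))$. *)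

From Stdlib Require Import ZArith.
Open Scope Z_scope.

Definition T (n : Z) : Z :=
  if Z.even n then n / 2 else (3 * n + 1) / 2.

Fixpoint iterZ (f : Z -> Z) (k : nat) (n : Z) : Z :=
  match k with
  | O => n
  | S k' => f (iterZ f k' n)
  end.

(* F on [2]_3 : F(n) = T(n) if n = 5 mod 6, T(T(n)) if n = 2 mod 6.
   Totalised on Z (values outside [2]_3 are never used in the statement,
   since F maps [2]_3 into [2]_3). *)
Definition F (n : Z) : Z :=
  if Z.eqb (n mod 6) 5 then T n else T (T n).

Definition collatz_conjecture : Prop :=
  forall n : Z, 0 < n -> exists k : nat, iterZ T k n = 1.

From Stdlib Require Import ZArith Lia Wf_nat.
Open Scope Z_scope.

(* F is the first-return map of T to [2]_3: from n = 5 mod 6 the next T-step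
   is already in [2]_3, while from n = 2 mod 6 it lands in [1]_3 and the step
   after it returns to [2]_3.  Hence, on [2]_3, the F-orbit of n is exactly the
   part of the T-orbit lying in [2]_3; and as T m = 1 only for m = 2, a
   T-orbit from n <> 1 reaches 1 iff it reaches 2.
   Conversely every positive integer either halves or, if odd, is sent by T
   into [2]_3, so reaching 1 from [2]_3 gives the whole conjecture. *)

Lemma iterZ_add f i j n : iterZ f (i + j) n = iterZ f i (iterZ f j n).
Proof. induction i as [|i IH]; simpl; congruence. Qed.

Lemma iterZ_Sr f k n : iterZ f (S k) n = iterZ f k (f n).
Proof. rewrite <- Nat.add_1_r. apply iterZ_add. Qed.

Section FirstReturnMap.

Variables (f g : Z -> Z) (A : Z -> Prop) (r : Z -> nat).
Hypothesis g_iter : forall x, g x = iterZ f (r x) x.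

Lemma iterZ_induced k x : exists j, iterZ g k x = iterZ f j x.
Proof.
  induction k as [|k [j IH]].
  - exists O. reflexivity.
  - exists (r (iterZ g k x) + j)%nat. simpl. rewrite g_iter, IH, iterZ_add.
    reflexivity.
Qed.

Hypotheses (r_pos : forall x, A x -> (0 < r x)%nat)
  (A_g : forall x, A x -> A (g x))
  (r_first : forall x i, A x -> (0 < i < r x)%nat -> ~ A (iterZ f i x)).

Lemma iterZ_induced_complete t x :
  A x -> A (iterZ f t x) -> exists k, iterZ g k x = iterZ f t x.
Proof.
  revert x; induction t as [t IH] using (well_founded_induction lt_wf).
  intros x Ax At.
  destruct (Nat.eq_dec t 0) as [->|t_pos]; [exists O; reflexivity|].
  destruct (Nat.lt_ge_cases t (r x)) as [t_lt|t_ge].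
  - exfalso. apply (r_first x t); [assumption|lia|assumption].
  - assert (t_split : iterZ f t x = iterZ f (t - r x) (g x)).
    { rewrite g_iter, <- iterZ_add. f_equal. lia. }
    rewrite t_split in At |- *.
    destruct (IH (t - r x)%nat ltac:(specialize (r_pos x Ax); lia) (g x) (A_g x Ax) At)
      as [k Hk].
    exists (S k). rewrite iterZ_Sr. exact Hk.
Qed.

End FirstReturnMap.

Lemma T_even n : n mod 2 = 0 -> 2 * T n = n.
Proof.
  intro Hn. unfold T. rewrite Zeven_mod, Hn, Z.eqb_refl.
  Z.div_mod_to_equations; lia.
Qed.

Lemma T_odd n : n mod 2 = 1 -> 2 * T n = 3 * n + 1.
Proof.
  intro Hn. unfold T. rewrite Zeven_mod, Hn. cbn [Z.eqb].
  Z.div_mod_to_equations; lia.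
Qed.

Lemma T_eq_1 n : T n = 1 -> n = 2.
Proof.
  intro H. assert (Hn : n mod 2 = 0 \/ n mod 2 = 1) by (Z.div_mod_to_equations; lia).
  destruct Hn as [Hn|Hn]; [apply T_even in Hn | apply T_odd in Hn]; lia.
Qed.

Lemma T_lt n : 0 < n -> n mod 2 = 0 -> 0 < T n < n.
Proof. intros Hpos Hn. apply T_even in Hn. lia. Qed.

Lemma T_odd_mod3 n : n mod 2 = 1 -> T n mod 3 = 2.
Proof. intro Hn. apply T_odd in Hn. Z.div_mod_to_equations; lia. Qed.

Lemma T_mod3_of_mod6_2 n : n mod 6 = 2 -> T n mod 3 = 1.
Proof.
  intro Hn. assert (Hev : n mod 2 = 0) by (Z.div_mod_to_equations; lia).
  apply T_even in Hev. Z.div_mod_to_equations; lia.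
Qed.

Definition F_steps (n : Z) : nat := if Z.eqb (n mod 6) 5 then 1%nat else 2%nat.

Lemma F_iterZ n : F n = iterZ T (F_steps n) n.
Proof. unfold F, F_steps. destruct (Z.eqb (n mod 6) 5); reflexivity. Qed.

Lemma F_mod3 n : n mod 3 = 2 -> F n mod 3 = 2.
Proof.
  intro Hn. unfold F. destruct (Z.eqb_spec (n mod 6) 5) as [H5|H5].
  - apply T_odd_mod3. Z.div_mod_to_equations; lia.
  - assert (H2 : n mod 6 = 2) by (Z.div_mod_to_equations; lia).
    assert (Hev : n mod 2 = 0) by (Z.div_mod_to_equations; lia).
    apply T_even in Hev.
    assert (Hpar : T n mod 2 = 0 \/ T n mod 2 = 1) by (Z.div_mod_to_equations; lia).
    destruct Hpar as [Hpar|Hpar]; [|apply T_odd_mod3, Hpar].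
    apply T_even in Hpar. Z.div_mod_to_equations; lia.
Qed.

Lemma F_first_return n i :
  n mod 3 = 2 -> (0 < i < F_steps n)%nat -> iterZ T i n mod 3 <> 2.
Proof.
  unfold F_steps. intros Hn Hi. destruct (Z.eqb_spec (n mod 6) 5); [lia|].
  replace i with 1%nat by lia. simpl.
  rewrite T_mod3_of_mod6_2 by (Z.div_mod_to_equations; lia). lia.
Qed.

Lemma F_reaches_of_T_reaches n t :
  n mod 3 = 2 -> iterZ T t n = 2 -> exists k, iterZ F k n = 2.
Proof.
  intros Hn Ht.
  assert (steps_pos : forall x, x mod 3 = 2 -> (0 < F_steps x)%nat).
  { intros x _. unfold F_steps. destruct (Z.eqb (x mod 6) 5); lia. }
  destruct (iterZ_induced_complete T F (fun m => m mod 3 = 2) F_steps F_iterZ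
              steps_pos F_mod3 F_first_return t n Hn) as [k Hk];
    [rewrite Ht; reflexivity|].
  exists k. congruence.
Qed.

Lemma collatz_of_mod3_2
  (H : forall n, 0 < n -> n mod 3 = 2 -> exists k, iterZ T k n = 1) :
  collatz_conjecture.
Proof.
  intros n Hn. assert (Hnonneg : 0 <= n) by lia. revert Hn.
  apply (Z_lt_induction (fun n => 0 < n -> exists k, iterZ T k n = 1));
    [clear n Hnonneg; intros n IH Hpos | exact Hnonneg].
  destruct (Z.eq_dec (n mod 3) 2) as [H3|H3]; [exact (H n Hpos H3)|].
  assert (Hpar : n mod 2 = 0 \/ n mod 2 = 1) by (Z.div_mod_to_equations; lia).
  destruct Hpar as [Hev|Hodd].
  - destruct (T_lt n Hpos Hev) as [HT0 HTn].
    destruct (IH (T n) ltac:(lia) HT0) as [k Hk].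
    exists (S k). rewrite iterZ_Sr. exact Hk.
  - assert (HT0 : 0 < T n) by (apply T_odd in Hodd; lia).
    destruct (H (T n) HT0 (T_odd_mod3 n Hodd)) as [k Hk].
    exists (S k). rewrite iterZ_Sr. exact Hk.
Qed.

Theorem lemma1 :
  collatz_conjecture <->
  (forall n : Z, 0 < n -> n mod 3 = 2 -> exists k : nat, iterZ F k n = 2).
Proof.
  split.
  - intros C n Hpos Hn. destruct (C n Hpos) as [[|t] Ht]; simpl in Ht.
    + subst n. discriminate.
    + exact (F_reaches_of_T_reaches n t Hn (T_eq_1 _ Ht)).
  - intros H. apply collatz_of_mod3_2. intros n Hpos Hn.
    destruct (H n Hpos Hn) as [k Hk].
    destruct (iterZ_induced T F F_steps F_iterZ k n) as [j Hj].
    exists (S j). simpl. rewrite <- Hj, Hk. reflexivity.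
Qed.
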